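(* Let $E$ be a nondeterministic expression and $X$ a variable with $E\rhd X$ (i.e. $E\rhd\{X\}$). Then $E = E + X$ is derivable from the axiom system.
   Context: Fix a set $\mathsf{Act}$ of actions containing $\tau$ and a set $\mathsf{Var}$ of variables. Nondeterministic expressions: $E ::= 0 \mid X \mid \alpha.P \mid \mathrm{rec}\,X.E \mid E + E$; probabilistic expressions: $P ::= \partial(E) \mid P \oplus_p P$ ($0<p<1$); $\alpha.E$ abbreviates $\alpha.\partial(E)$. $\mathrm{rec}\,X$ binds $X$; $E[\vec F/\vec X]$ is capture-avoiding substitution. $\sum_{i\in I}E_i$ is an iterated $+$; $\bigoplus_{i\in I}p_iP_i$ (with $\sum p_i=1$) is an iterated $\oplus$ giving $P_i$ probability $p_i$, and $\bigoplus_ip_iE_i$ abbreviates $\bigoplus_ip_i\partial(E_i)$. Probabilistic unguardedness $E\rhd V$ ($V\subseteq\mathsf{Var}$, also for probabilistic expressions) is the least relation with: $X\rhd\{X\}$; $\tau.P\rhd V$ if $P\rhd V$; $\mathrm{rec}\,Y.E\rhd V\setminus\{Y\}$ if $E\rhd V$ and $V\ne\{Y\}$; $E+F\rhd V$ if $E\rhd V$; $E+F\rhd W$ if $F\rhd W$; $\partial(E)\rhd V$ if $E\rhd V$; $P\oplus_pQ\rhd V\cup W$ if $P\rhd V$ and $Q\rhd W$. Provable equality $=$ is the least relation on expressions (both categories) that is an equivalence, a congruence for all operators, allows renaming of bound variables, contains all instances of the axioms below, and is closed under rule R2: N1 $E+F=F+E$; N2 $E+(F+G)=(E+F)+G$;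 N3 $E+E=E$; N4 $E+0=E$; P1 $P\oplus_pQ=Q\oplus_{1-p}P$; P2 $P\oplus_p(Q\oplus_{q/(1-p)}R)=(P\oplus_{p/(p+q)}Q)\oplus_{p+q}R$; P3 $P\oplus_pP=P$; T1 $\alpha.(\partial(\tau.\partial(E))\oplus_pP)=\alpha.(\partial(E)\oplus_pP)$; T2 $\tau.\bigoplus_{i\in I}p_i(E_i+F)+F=\tau.\bigoplus_{i\in I}p_i(E_i+F)$; T3 $\tau.\bigoplus_{i}p_i(E_i+\alpha.P_i)+\alpha.\bigoplus_ip_iP_i=\tau.\bigoplus_ip_i(E_i+\alpha.P_i)$; T4 $\alpha.\bigoplus_ip_i(E_i+\tau.P_i)+\alpha.\bigoplus_ip_iP_i=\alpha.\bigoplus_ip_i(E_i+\tau.P_i)$; C $\alpha.P+\alpha.Q=\alpha.P+\alpha.(P\oplus_pQ)+\alpha.Q$; R1 $\mathrm{rec}\,X.E=E[\mathrm{rec}\,X.E/X]$; R2 if $F=E[F/X]$ and not $E\rhd\{X\}$, then $F=\mathrm{rec}\,X.E$; R3 $\mathrm{rec}\,X.(\tau.(\partial(X+E)\oplus_pP)+F)=\mathrm{rec}\,X.(\tau.(\partial(X+E)\oplus_pP)+\tau.P+F)$; R4 $\mathrm{rec}\,X.(X+E)=\mathrm{rec}\,X.E$; R5 $\mathrm{rec}\,X.(\tau.\partial(X)+E)=\mathrm{rec}\,X.\tau.\partial(E)$; R6 $\mathrm{rec}\,X.(\tau.\bigoplus_{i\in I}p_i(X+E_i)+F)=\mathrm{rec}\,X.(\tau.\partial(X)+\sum_{i\in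 I}E_i+F)$. *)

From Stdlib Require Import Reals List.
Import ListNotations.
Open Scope R_scope.

Set Implicit Arguments.

Section Syntax.
(* A = the set Act of actions; variables are natural numbers (an infinite set Var). *)
Variable A : Type.

Inductive nexp : Type :=
| Nil : nexp
| Var : nat -> nexp
| Pre : A -> pexp -> nexp
| Rec : nat -> nexp -> nexp
| Sum : nexp -> nexp -> nexp
with pexp : Type :=
| Dirac : nexp -> pexp
| PSum : R -> pexp -> pexp -> pexp.

Definition preE (a : A) (E : nexp) : nexp := Pre a (Dirac E).

Fixpoint wfN (E : nexp) : Prop :=
  match E with
  | Nil => True
  | Var _ => True
  | Pre _ P => wfP P
  | Rec _ E => wfN E
  | Sum E F => wfN E /\ wfN F
  end
with wfP (P : pexp) : Prop :=
  match P with
  | Dirac E => wfN E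
  | PSum p P Q => 0 < p < 1 /\ wfP P /\ wfP Q
  end.

Fixpoint freeN (x : nat) (E : nexp) : Prop :=
  match E with
  | Nil => False
  | Var y => x = y
  | Pre _ P => freeP x P
  | Rec y E => x <> y /\ freeN x E
  | Sum E F => freeN x E \/ freeN x F
  end
with freeP (x : nat) (P : pexp) : Prop :=
  match P with
  | Dirac E => freeN x E
  | PSum _ P Q => freeP x P \/ freeP x Q
  end.

(* Substitution E[G/x] of free occurrences (no renaming); it is used only
   under the side condition substOk below, which guarantees no capture. *)
Fixpoint substN (E : nexp) (x : nat) (G : nexp) : nexp :=
  match E with
  | Nil => Nil
  | Var y => if Nat.eqb x y then G else Var y
  | Pre a P => Pre a (substP P x G)
  | Rec y E' => if Nat.eqb x y then Rec y E' else Rec y (substN E' x G)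
  | Sum E F => Sum (substN E x G) (substN F x G)
  end
with substP (P : pexp) (x : nat) (G : nexp) : pexp :=
  match P with
  | Dirac E => Dirac (substN E x G)
  | PSum p P Q => PSum p (substP P x G) (substP Q x G)
  end.

(* G is substitutable for x in E: no free variable of G gets captured. *)
Fixpoint substOkN (x : nat) (G : nexp) (E : nexp) : Prop :=
  match E with
  | Nil => True
  | Var _ => True
  | Pre _ P => substOkP x G P
  | Rec y E' => x = y \/ ~ freeN x E' \/ (~ freeN y G /\ substOkN x G E')
  | Sum E F => substOkN x G E /\ substOkN x G F
  end
with substOkP (x : nat) (G : nexp) (P : pexp) : Prop :=
  match P with
  | Dirac E => substOkN x G E
  | PSum _ P Q => substOkP x G P /\ substOkP x G Q
  end.

(* Iterated probabilistic choice  ⊕_{i} p_i P_i  over a nonempty list of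
   (p_i, P_i), right-nested:  P_1 ⊕_{p_1} (P_2 ⊕_{p_2/(1-p_1)} (...)). *)
Fixpoint pbig_aux (s : R) (l : list (R * pexp)) : pexp :=
  match l with
  | [] => Dirac Nil
  | [(_, P)] => P
  | (p, P) :: l' => PSum (p / s) P (pbig_aux (s - p) l')
  end.
Definition pbig (l : list (R * pexp)) : pexp := pbig_aux 1 l.

Fixpoint nsum (l : list nexp) : nexp :=
  match l with
  | [] => Nil
  | [E] => E
  | E :: l' => Sum E (nsum l')
  end.

Definition dist {T : Type} (l : list (R * T)) : Prop :=
  l <> [] /\ Forall (fun x => 0 < fst x) l /\
  fold_right (fun x acc => fst x + acc) 0 l = 1.

Definition vset := nat -> Prop.
Definition seteq (V W : vset) : Prop := forall z, V z <-> W z.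

Variable tau : A.

(* Probabilistic unguardedness  E ▷ V  (sets of variables taken up to
   extensional equality). *)
Inductive ugN : nexp -> vset -> Prop :=
| ug_var : forall X V, seteq V (fun z => z = X) -> ugN (Var X) V
| ug_tau : forall P V, ugP P V -> ugN (Pre tau P) V
| ug_rec : forall Y E V V', ugN E V -> ~ seteq V (fun z => z = Y) ->
    seteq V' (fun z => V z /\ z <> Y) -> ugN (Rec Y E) V'
| ug_sumL : forall E F V, ugN E V -> ugN (Sum E F) V
| ug_sumR : forall E F W, ugN F W -> ugN (Sum E F) W
with ugP : pexp -> vset -> Prop :=
| ug_dirac : forall E V, ugN E V -> ugP (Dirac E) V
| ug_psum : forall p P Q V W U, ugP P V -> ugP Q W ->
    seteq U (fun z => V z \/ W z) -> ugP (PSum p P Q) U.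

Inductive eqN : nexp -> nexp -> Prop :=
| eqN_refl : forall E, wfN E -> eqN E E
| eqN_sym : forall E F, eqN E F -> eqN F E
| eqN_trans : forall E F G, eqN E F -> eqN F G -> eqN E G
| eqN_pre : forall a P P', eqP P P' -> eqN (Pre a P) (Pre a P')
| eqN_rec : forall x E E', eqN E E' -> eqN (Rec x E) (Rec x E')
| eqN_sum : forall E E' F F', eqN E E' -> eqN F F' -> eqN (Sum E F) (Sum E' F')
| eqN_alpha : forall x y E, wfN E -> ~ freeN y (Rec x E) ->
    substOkN x (Var y) E -> eqN (Rec x E) (Rec y (substN E x (Var y)))
| ax_N1 : forall E F, wfN E -> wfN F -> eqN (Sum E F) (Sum F E)
| ax_N2 : forall E F G, wfN E -> wfN F -> wfN G ->
    eqN (Sum E (Sum F G)) (Sum (Sum E F) G)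
| ax_N3 : forall E, wfN E -> eqN (Sum E E) E
| ax_N4 : forall E, wfN E -> eqN (Sum E Nil) E
| ax_T1 : forall a E p P, wfN E -> wfP P -> 0 < p < 1 ->
    eqN (Pre a (PSum p (Dirac (preE tau E)) P)) (Pre a (PSum p (Dirac E) P))
| ax_T2 : forall (l : list (R * nexp)) F, dist l -> Forall (fun x => wfN (snd x)) l ->
    wfN F ->
    eqN (Sum (Pre tau (pbig (map (fun x => (fst x, Dirac (Sum (snd x) F))) l))) F)
        (Pre tau (pbig (map (fun x => (fst x, Dirac (Sum (snd x) F))) l)))
| ax_T3 : forall a (l : list (R * (nexp * pexp))), dist l ->
    Forall (fun x => wfN (fst (snd x)) /\ wfP (snd (snd x))) l ->
    eqN (Sum (Pre tau (pbig (map (fun x => (fst x,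
                Dirac (Sum (fst (snd x)) (Pre a (snd (snd x)))))) l)))
             (Pre a (pbig (map (fun x => (fst x, snd (snd x))) l))))
        (Pre tau (pbig (map (fun x => (fst x,
                Dirac (Sum (fst (snd x)) (Pre a (snd (snd x)))))) l)))
| ax_T4 : forall a (l : list (R * (nexp * pexp))), dist l ->
    Forall (fun x => wfN (fst (snd x)) /\ wfP (snd (snd x))) l ->
    eqN (Sum (Pre a (pbig (map (fun x => (fst x,
                Dirac (Sum (fst (snd x)) (Pre tau (snd (snd x)))))) l)))
             (Pre a (pbig (map (fun x => (fst x, snd (snd x))) l))))
        (Pre a (pbig (map (fun x => (fst x,
                Dirac (Sum (fst (snd x)) (Pre tau (snd (snd x)))))) l)))
| ax_C : forall a p P Q, wfP P -> wfP Q -> 0 < p < 1 ->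
    eqN (Sum (Pre a P) (Pre a Q))
        (Sum (Sum (Pre a P) (Pre a (PSum p P Q))) (Pre a Q))
| ax_R1 : forall x E, wfN E -> substOkN x (Rec x E) E ->
    eqN (Rec x E) (substN E x (Rec x E))
| rule_R2 : forall x E F, wfN E -> wfN F -> substOkN x F E ->
    eqN F (substN E x F) -> ~ ugN E (fun z => z = x) -> eqN F (Rec x E)
| ax_R3 : forall x E p P F, wfN E -> wfP P -> wfN F -> 0 < p < 1 ->
    eqN (Rec x (Sum (Pre tau (PSum p (Dirac (Sum (Var x) E)) P)) F))
        (Rec x (Sum (Sum (Pre tau (PSum p (Dirac (Sum (Var x) E)) P)) (Pre tau P)) F))
| ax_R4 : forall x E, wfN E -> eqN (Rec x (Sum (Var x) E)) (Rec x E)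
| ax_R5 : forall x E, wfN E ->
    eqN (Rec x (Sum (preE tau (Var x)) E)) (Rec x (preE tau E))
| ax_R6 : forall x (l : list (R * nexp)) F, dist l ->
    Forall (fun y => wfN (snd y)) l -> wfN F ->
    eqN (Rec x (Sum (Pre tau (pbig (map (fun y => (fst y, Dirac (Sum (Var x) (snd y)))) l))) F))
        (Rec x (Sum (Sum (preE tau (Var x)) (nsum (map snd l))) F))
with eqP : pexp -> pexp -> Prop :=
| eqP_refl : forall P, wfP P -> eqP P P
| eqP_sym : forall P Q, eqP P Q -> eqP Q P
| eqP_trans : forall P Q S, eqP P Q -> eqP Q S -> eqP P S
| eqP_dirac : forall E E', eqN E E' -> eqP (Dirac E) (Dirac E')
| eqP_psum : forall p P P' Q Q', 0 < p < 1 -> eqP P P' -> eqP Q Q' ->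
    eqP (PSum p P Q) (PSum p P' Q')
| ax_P1 : forall p P Q, 0 < p < 1 -> wfP P -> wfP Q ->
    eqP (PSum p P Q) (PSum (1 - p) Q P)
| ax_P2 : forall p q P Q S, 0 < p -> 0 < q -> p + q < 1 -> wfP P -> wfP Q -> wfP S ->
    eqP (PSum p P (PSum (q / (1 - p)) Q S)) (PSum (p + q) (PSum (p / (p + q)) P Q) S)
| ax_P3 : forall p P, 0 < p < 1 -> wfP P -> eqP (PSum p P P) P.

End Syntax.

Arguments Nil {A}.
Arguments Var {A}.

From Pilot Require Import Defs.
From Stdlib Require Import Reals List Lra Lia.
Import ListNotations.
Open Scope R_scope.

(** By induction on the derivation of [E ▷ V] one shows that [E] absorbs a
    witness of its unguarded variables: either [V = {Z}] and [E = E + Z], or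
    [E = E + τ.⊕_i p_i ∂(z_i + F_i)] for a distribution whose heads [z_i] are
    exactly the elements of [V].  Under [τ.P], every branch
    [∂e] of [P] is first guarded as [∂(τ.e)] (T1), then absorbs the witness of
    its own [e], and T4 collects these witnesses into one flattened
    distribution.  Under [rec Y], the branches headed by [Y] are pruned with R3,
    the others renormalised, and the fixpoint unfolded by R1 (after renaming
    bound variables to avoid capture).  Finally, if [V = {X}] the witness
    [τ.⊕_i p_i ∂(X + F_i)] absorbs [X] by T2, hence [E = E + X]. *)

Scheme nexp_mut_ind := Induction for nexp Sort Prop
  with pexp_mut_ind := Induction for pexp Sort Prop.
Combined Scheme exp_mut from nexp_mut_ind, pexp_mut_ind.

Scheme ugN_min := Minimality for ugN Sort Prop
  with ugP_min := Minimality for ugP Sort Prop.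

(** * Weighted lists *)

Definition wsum {T : Type} (l : list (R * T)) : R := fold_right (fun x acc => fst x + acc) 0 l.
Definition pos_weights {T : Type} (l : list (R * T)) : Prop := Forall (fun x => 0 < fst x) l.
Definition scale {T : Type} (c : R) (l : list (R * T)) : list (R * T) :=
  map (fun x => (c * fst x, snd x)) l.
Definition remap {T U : Type} (f : R * T -> U) (l : list (R * T)) : list (R * U) :=
  map (fun x => (fst x, f x)) l.
Definition normalize {T : Type} (l : list (R * T)) : list (R * T) := scale (/ wsum l) l.
Definition flatten {T : Type} (L : list (R * list (R * T))) : list (R * T) :=
  flat_map (fun x => scale (fst x) (snd x)) L.

Lemma wsum_cons {T : Type} (x : R * T) l : wsum (x :: l) = fst x + wsum l.
Proof. reflexivity. Qed.

Lemma wsum_app {T : Type} (l1 l2 : list (R * T)) : wsum (l1 ++ l2) = wsum l1 + wsum l2.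
Proof. induction l1 as [|x l1 IH]; simpl app; [simpl; lra|]. rewrite !wsum_cons, IH; lra. Qed.

Lemma wsum_scale {T : Type} c (l : list (R * T)) : wsum (scale c l) = c * wsum l.
Proof.
  induction l as [|x l IH]; [simpl; lra|].
  change (scale c (x :: l)) with ((c * fst x, snd x) :: scale c l).
  rewrite !wsum_cons, IH. simpl; lra.
Qed.

Lemma wsum_remap {T U : Type} (f : R * T -> U) l : wsum (remap f l) = wsum l.
Proof.
  induction l as [|x l IH]; auto.
  change (remap f (x :: l)) with ((fst x, f x) :: remap f l).
  now rewrite !wsum_cons, IH.
Qed.

Lemma wsum_pos {T : Type} (l : list (R * T)) : l <> [] -> pos_weights l -> 0 < wsum l.
Proof.
  induction l as [|x [|y l] IH]; intros Hn Hp; [congruence| |];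
    inversion Hp; subst; rewrite wsum_cons.
  - simpl; lra.
  - assert (0 < wsum (y :: l)) by (apply IH; auto; congruence). lra.
Qed.

Lemma pos_weights_app {T : Type} (l1 l2 : list (R * T)) :
  pos_weights l1 -> pos_weights l2 -> pos_weights (l1 ++ l2).
Proof. intros; apply Forall_app; auto. Qed.

Lemma pos_weights_scale {T : Type} c (l : list (R * T)) :
  0 < c -> pos_weights l -> pos_weights (scale c l).
Proof.
  intros Hc Hl. apply Forall_map. eapply Forall_impl; [|exact Hl].
  simpl; intros; nra.
Qed.

Lemma pos_weights_remap {T U : Type} (f : R * T -> U) l :
  pos_weights l -> pos_weights (remap f l).
Proof. intros Hl. apply Forall_map. exact Hl. Qed.

Lemma scale_neq_nil {T : Type} c (l : list (R * T)) : l <> [] -> scale c l <> [].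
Proof. intros Hl Hs. apply map_eq_nil in Hs. auto. Qed.

Lemma remap_neq_nil {T U : Type} (f : R * T -> U) l : l <> [] -> remap f l <> [].
Proof. intros Hl Hs. apply map_eq_nil in Hs. auto. Qed.

Lemma remap_app {T U : Type} (f : R * T -> U) (l1 l2 : list (R * T)) :
  remap f (l1 ++ l2) = remap f l1 ++ remap f l2.
Proof. apply map_app. Qed.

Lemma remap_remap {T U V : Type} (f : R * T -> U) (g : R * U -> V) (l : list (R * T)) :
  remap g (remap f l) = remap (fun x => g (fst x, f x)) l.
Proof. unfold remap. rewrite map_map. reflexivity. Qed.

Lemma remap_scale {T U : Type} (f : R * T -> U) c l :
  (forall x, f (c * fst x, snd x) = f x) -> remap f (scale c l) = scale c (remap f l).
Proof.
  intros Hf. unfold remap, scale. rewrite !map_map. apply map_ext. intros x. simpl. now rewrite Hf.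
Qed.

Lemma dist_remap {T U : Type} (f : R * T -> U) l : Defs.dist l -> Defs.dist (remap f l).
Proof.
  intros (Hn & Hp & Hs). split; [|split].
  - apply remap_neq_nil; auto.
  - apply pos_weights_remap; auto.
  - change (wsum (remap f l) = 1). now rewrite wsum_remap.
Qed.

Lemma dist_normalize {T : Type} (l : list (R * T)) :
  l <> [] -> pos_weights l -> Defs.dist (normalize l).
Proof.
  intros Hn Hp. assert (Hs : 0 < wsum l) by (apply wsum_pos; auto).
  split; [|split].
  - apply scale_neq_nil; auto.
  - apply pos_weights_scale; auto. apply Rinv_0_lt_compat; auto.
  - change (wsum (normalize l) = 1). unfold normalize. rewrite wsum_scale. field. lra.
Qed.

Lemma flatten_cons {T : Type} x (L : list (R * list (R * T))) :
  flatten (x :: L) = scale (fst x) (snd x) ++ flatten L.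
Proof. reflexivity. Qed.

Lemma flatten_neq_nil {T : Type} (L : list (R * list (R * T))) :
  L <> [] -> Forall (fun x => Defs.dist (snd x)) L -> flatten L <> [].
Proof.
  intros Hn Hd. destruct L as [|x L]; [congruence|]. inversion Hd as [|? ? [Hx _] _]; subst.
  rewrite flatten_cons. intros Happ. apply app_eq_nil in Happ.
  apply (scale_neq_nil (fst x) _ Hx). tauto.
Qed.

Lemma wsum_flatten {T : Type} (L : list (R * list (R * T))) :
  Forall (fun x => Defs.dist (snd x)) L -> wsum (flatten L) = wsum L.
Proof.
  induction L as [|x L IH]; intros Hd; [reflexivity|].
  inversion Hd as [|? ? (_ & _ & Hs) HL]; subst. change (wsum (snd x) = 1) in Hs.
  rewrite flatten_cons, wsum_app, wsum_scale, IH, wsum_cons, Hs by auto. ring.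
Qed.

Lemma pos_weights_flatten {T : Type} (L : list (R * list (R * T))) :
  pos_weights L -> Forall (fun x => Defs.dist (snd x)) L -> pos_weights (flatten L).
Proof.
  induction L as [|x L IH]; intros Hp Hd; [constructor|].
  inversion Hp; inversion Hd as [|? ? (_ & Hx & _) HL]; subst.
  rewrite flatten_cons. apply pos_weights_app; auto. apply pos_weights_scale; auto.
Qed.

Lemma Forall_flatten {T : Type} (Pr : T -> Prop) (L : list (R * list (R * T))) :
  Forall (fun x => Forall (fun y => Pr (snd y)) (snd x)) L ->
  Forall (fun y => Pr (snd y)) (flatten L).
Proof.
  induction L as [|x L IH]; intros H; [constructor|]. inversion H; subst.
  rewrite flatten_cons. apply Forall_app. split; auto. apply Forall_map. auto.
Qed.

Lemma Exists_flatten {T : Type} (Pr : T -> Prop) (L : list (R * list (R * T))) :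
  Exists (fun y => Pr (snd y)) (flatten L) <->
  Exists (fun x => Exists (fun y => Pr (snd y)) (snd x)) L.
Proof.
  induction L as [|x L IH]; [split; intros H; inversion H|].
  rewrite flatten_cons, Exists_app, Exists_cons, IH. unfold scale. rewrite Exists_map. tauto.
Qed.

Lemma remap_flatten {T U : Type} (f : R * T -> U) (L : list (R * list (R * T))) :
  (forall c x, f (c * fst x, snd x) = f x) ->
  remap f (flatten L) = flatten (remap (fun x => remap f (snd x)) L).
Proof.
  intros Hf. induction L as [|x L IH]; [reflexivity|].
  change (remap ?h (x :: L)) with ((fst x, h x) :: remap h L).
  rewrite !flatten_cons, <- IH. simpl fst; simpl snd.
  rewrite <- remap_scale by auto. apply map_app.
Qed.

Lemma ratio_in_01 a b : 0 < a -> 0 < b -> 0 < a / (a + b) < 1.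
Proof.
  intros. split; [apply Rdiv_lt_0_compat; lra|].
  apply Rmult_lt_reg_r with (a + b); [lra|].
  unfold Rdiv. rewrite Rmult_assoc, Rinv_l; lra.
Qed.

Section Derivations.
Variable A : Type.
Variable tau : A.

(** * Probabilistic mixtures *)

Definition mix (l : list (R * pexp A)) : pexp A := pbig_aux (wsum l) l.
Definition wf_branches (l : list (R * pexp A)) : Prop := Forall (fun x => wfP (snd x)) l.

Lemma pbig_mix l : wsum l = 1 -> pbig l = mix l.
Proof. intros H. unfold pbig, mix. now rewrite H. Qed.

Lemma mix_cons w P r : r <> [] -> mix ((w, P) :: r) = PSum (w / (w + wsum r)) P (mix r).
Proof.
  intros Hr. destruct r as [|y r]; [congruence|].
  unfold mix. rewrite wsum_cons. simpl fst. cbn [pbig_aux].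
  now replace (w + wsum (y :: r) - w) with (wsum (y :: r)) by ring.
Qed.

Lemma mix_single w (P : pexp A) : mix [(w, P)] = P.
Proof. reflexivity. Qed.

Lemma wf_mix l : l <> [] -> pos_weights l -> wf_branches l -> wfP (mix l).
Proof.
  induction l as [|[w P] [|y r] IH]; intros Hn Hp Hw; [congruence|exact (Forall_inv Hw)|].
  inversion Hp; inversion Hw; subst.
  rewrite mix_cons by congruence. cbn [wfP].
  repeat split; auto.
  - apply ratio_in_01; auto. apply wsum_pos; auto; congruence.
  - apply ratio_in_01; auto. apply wsum_pos; auto; congruence.
  - apply IH; auto; congruence.
Qed.

Lemma mix_scale c l : 0 < c -> pos_weights l -> mix (scale c l) = mix l.
Proof.
  intros Hc. induction l as [|[w P] [|y r] IH]; intros Hp; auto.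
  inversion Hp as [|? ? Hw Hpr]; subst. simpl in Hw.
  change (scale c ((w, P) :: y :: r)) with ((c * w, P) :: scale c (y :: r)).
  rewrite !mix_cons, IH, wsum_scale by (auto; try apply scale_neq_nil; congruence).
  assert (0 < wsum (y :: r)) by (apply wsum_pos; auto; congruence).
  f_equal. field. split; nra.
Qed.

Lemma psum_comm_weights u v (P Q : pexp A) : 0 < u -> 0 < v -> wfP P -> wfP Q ->
  eqP tau (PSum (u / (u + v)) P Q) (PSum (v / (v + u)) Q P).
Proof.
  intros. replace (v / (v + u)) with (1 - u / (u + v)) by (field; lra).
  apply ax_P1; auto. apply ratio_in_01; auto.
Qed.

Lemma psum_assoc_weights u v w (P Q S : pexp A) : 0 < u -> 0 < v -> 0 < w ->
  wfP P -> wfP Q -> wfP S ->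
  eqP tau (PSum (u / (u + (v + w))) P (PSum (v / (v + w)) Q S))
          (PSum ((u + v) / ((u + v) + w)) (PSum (u / (u + v)) P Q) S).
Proof.
  intros. set (s := u + (v + w)).
  replace (v / (v + w)) with ((v / s) / (1 - u / s)) by (unfold s; field; lra).
  replace ((u + v) / ((u + v) + w)) with (u / s + v / s) by (unfold s; field; lra).
  replace (u / (u + v)) with ((u / s) / (u / s + v / s)) by (unfold s; field; lra).
  assert (u / s + v / s < 1).
  { replace (u / s + v / s) with ((u + v) / ((u + v) + w)) by (unfold s; field; lra).
    apply ratio_in_01; lra. }
  apply ax_P2; auto; apply Rdiv_lt_0_compat; unfold s; lra.
Qed.

Lemma mix_app l1 l2 : l1 <> [] -> l2 <> [] -> pos_weights l1 -> pos_weights l2 ->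
  wf_branches l1 -> wf_branches l2 ->
  eqP tau (PSum (wsum l1 / (wsum l1 + wsum l2)) (mix l1) (mix l2)) (mix (l1 ++ l2)).
Proof.
  intros Hn1 Hn2 Hp1 Hp2 Hw1 Hw2.
  assert (Hs2 : 0 < wsum l2) by (apply wsum_pos; auto).
  assert (Hm2 : wfP (mix l2)) by (apply wf_mix; auto).
  induction l1 as [|[w P] [|y r1] IH]; [congruence| |].
  - rewrite mix_single. simpl app. rewrite mix_cons by auto.
    replace (wsum [(w, P)]) with w by (simpl; ring).
    apply eqP_refl. inversion Hp1; inversion Hw1. cbn [wfP].
    repeat split; auto; apply ratio_in_01; auto.
  - inversion Hp1 as [|? ? Hw Hpr]; inversion Hw1 as [|? ? HP Hwr]; subst. simpl in Hw, HP.
    set (r := y :: r1) in *.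
    assert (Hr : r <> []) by discriminate.
    assert (Hs1 : 0 < wsum r) by (apply wsum_pos; auto).
    change (((w, P) :: r) ++ l2) with ((w, P) :: (r ++ l2)).
    rewrite !mix_cons, wsum_cons, wsum_app by (auto; unfold r; discriminate).
    simpl fst.
    eapply eqP_trans.
    { apply eqP_sym, psum_assoc_weights; auto. apply wf_mix; auto. }
    apply eqP_psum; [apply ratio_in_01; lra | apply eqP_refl; auto | auto].
Qed.

Lemma mix_rotate x r : r <> [] -> pos_weights (x :: r) -> wf_branches (x :: r) ->
  eqP tau (mix (x :: r)) (mix (r ++ [x])).
Proof.
  intros Hr Hp Hw. destruct x as [w P].
  inversion Hp as [|? ? Hx Hpr]; inversion Hw as [|? ? HP Hwr]; subst. simpl in Hx, HP.
  assert (Hs : 0 < wsum r) by (apply wsum_pos; auto).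
  rewrite mix_cons by auto.
  eapply eqP_trans; [apply psum_comm_weights; auto; apply wf_mix; auto|].
  pose proof (mix_app r [(w, P)]) as Happ.
  rewrite mix_single in Happ. replace (wsum [(w, P)]) with w in Happ by (simpl; ring).
  apply Happ; auto; try discriminate; repeat constructor; auto.
Qed.

Lemma mix_cong {T : Type} (l : list (R * T)) (f g : R * T -> pexp A) :
  l <> [] -> pos_weights l -> (forall x, In x l -> eqP tau (f x) (g x)) ->
  eqP tau (mix (remap f l)) (mix (remap g l)).
Proof.
  induction l as [|x [|y r] IH]; intros Hn Hp Hfg; [congruence| |].
  - apply Hfg. now left.
  - inversion Hp; subst.
    change (remap ?h (x :: y :: r)) with ((fst x, h x) :: remap h (y :: r)).
    rewrite !mix_cons, !wsum_remap by (apply remap_neq_nil; discriminate).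
    apply eqP_psum.
    + apply ratio_in_01; auto. apply wsum_pos; auto; discriminate.
    + apply Hfg. now left.
    + apply IH; auto; [discriminate|]. intros; apply Hfg; now right.
Qed.

Lemma mix_flatten (L : list (R * list (R * pexp A))) : L <> [] -> pos_weights L ->
  Forall (fun x => Defs.dist (snd x)) L -> Forall (fun x => wf_branches (snd x)) L ->
  eqP tau (mix (remap (fun x => mix (snd x)) L)) (mix (flatten L)).
Proof.
  intros Hn Hp Hd Hw.
  induction L as [|[w M] [|y L'] IH]; [congruence| |].
  - inversion Hp; inversion Hd as [|? ? (HMn & HMp & _) _]; inversion Hw; subst.
    rewrite flatten_cons. simpl. rewrite app_nil_r, mix_scale by auto.
    apply eqP_refl, wf_mix; auto.
  - inversion Hp as [|? ? Hx HpL]; inversion Hd as [|? ? (HMn & HMp & HMs) HdL];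
      inversion Hw as [|? ? HMw HwL]; subst. simpl in Hx, HMn, HMp, HMs, HMw.
    set (L := y :: L') in *.
    assert (HL : L <> []) by discriminate.
    assert (HsL : 0 < wsum L) by (apply wsum_pos; auto).
    change (remap ?h ((w, M) :: L)) with ((w, h (w, M)) :: remap h L).
    rewrite mix_cons, wsum_remap by (apply remap_neq_nil; auto). simpl snd.
    eapply eqP_trans.
    { apply eqP_psum; [apply ratio_in_01; auto | apply eqP_refl, wf_mix; auto | apply IH; auto]. }
    rewrite flatten_cons, <- (mix_scale w M) by auto. simpl fst.
    replace (w / (w + wsum L)) with
      (wsum (scale w M) / (wsum (scale w M) + wsum (flatten L))).
    2:{ rewrite wsum_scale, wsum_flatten by auto. change (wsum M = 1) in HMs.
        rewrite HMs. f_equal; ring. }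
    apply mix_app; auto.
    + apply scale_neq_nil; auto.
    + apply flatten_neq_nil; auto.
    + apply pos_weights_scale; auto.
    + apply pos_weights_flatten; auto.
    + apply Forall_map; auto.
    + apply Forall_flatten; auto.
Qed.

Lemma mix_hom (phi : pexp A -> pexp A) l :
  (forall p P Q, phi (PSum p P Q) = PSum p (phi P) (phi Q)) -> l <> [] ->
  phi (mix l) = mix (remap (fun x => phi (snd x)) l).
Proof.
  intros Hphi Hn. unfold mix. rewrite wsum_remap. generalize (wsum l) as s.
  induction l as [|[w P] [|y r] IH]; intros s; [congruence|reflexivity|].
  change (pbig_aux s ((w, P) :: y :: r)) with (PSum (w / s) P (pbig_aux (s - w) (y :: r))).
  rewrite Hphi, IH by discriminate. reflexivity.
Qed.

Lemma mix_psum p M1 M2 : 0 < p < 1 -> Defs.dist M1 -> Defs.dist M2 ->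
  wf_branches M1 -> wf_branches M2 ->
  eqP tau (PSum p (mix M1) (mix M2)) (mix (scale p M1 ++ scale (1 - p) M2)).
Proof.
  intros Hp (Hn1 & Hp1 & Hs1) (Hn2 & Hp2 & Hs2) Hw1 Hw2.
  change (wsum M1 = 1) in Hs1. change (wsum M2 = 1) in Hs2.
  rewrite <- (mix_scale p M1), <- (mix_scale (1 - p) M2) by (auto; lra).
  replace p with (wsum (scale p M1) / (wsum (scale p M1) + wsum (scale (1 - p) M2))) at 1
    by (rewrite !wsum_scale, Hs1, Hs2; replace (p * 1 + (1 - p) * 1) with 1 by ring; field).
  apply mix_app; try apply scale_neq_nil; try apply pos_weights_scale; auto; try lra;
    apply Forall_map; auto.
Qed.

(** * Absorption of summands *)

Definition absorbs (E T : nexp A) : Prop := eqN tau E (Sum E T).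

Lemma absorbs_of_eqN_sum E K T : eqN tau E (Sum K T) -> wfN K -> wfN T -> absorbs E T.
Proof.
  intros He HK HT. unfold absorbs.
  eapply eqN_trans; [exact He|].
  eapply eqN_trans; [apply eqN_sum; [apply eqN_refl; auto | apply eqN_sym, ax_N3; auto]|].
  eapply eqN_trans; [apply ax_N2; auto|].
  apply eqN_sum; [apply eqN_sym; auto | apply eqN_refl; auto].
Qed.

Lemma absorbs_self E : wfN E -> absorbs E E.
Proof. intros HE. apply eqN_sym, ax_N3; auto. Qed.

Lemma absorbs_proper E E' T T' : eqN tau E E' -> eqN tau T T' -> absorbs E T -> absorbs E' T'.
Proof.
  intros HE HT H. unfold absorbs.
  eapply eqN_trans; [apply eqN_sym, HE|].
  eapply eqN_trans; [exact H|].
  apply eqN_sum; auto.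
Qed.

Lemma absorbs_trans E T U : absorbs E T -> absorbs T U -> wfN E -> wfN T -> wfN U -> absorbs E U.
Proof.
  intros HET HTU HE HT HU. unfold absorbs.
  eapply eqN_trans; [exact HET|].
  eapply eqN_trans; [apply eqN_sum; [apply eqN_refl; auto | exact HTU]|].
  eapply eqN_trans; [apply ax_N2; auto|].
  apply eqN_sum; [apply eqN_sym, HET | apply eqN_refl; auto].
Qed.

Lemma absorbs_sumL E G T : absorbs E T -> wfN E -> wfN G -> wfN T -> absorbs (Sum E G) T.
Proof.
  intros He HE HG HT. unfold absorbs.
  eapply eqN_trans; [apply eqN_sum; [exact He | apply eqN_refl; auto]|].
  eapply eqN_trans; [apply eqN_sym, ax_N2; auto|].
  eapply eqN_trans; [apply eqN_sum; [apply eqN_refl; auto | apply ax_N1; auto]|].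
  apply ax_N2; auto.
Qed.

Lemma absorbs_sumR E G T : absorbs G T -> wfN E -> wfN G -> wfN T -> absorbs (Sum E G) T.
Proof.
  intros He HE HG HT. unfold absorbs.
  eapply eqN_trans; [apply eqN_sum; [apply eqN_refl; auto | exact He]|].
  apply ax_N2; auto.
Qed.

Lemma sum_exchange E F G : wfN E -> wfN F -> wfN G ->
  eqN tau (Sum (Sum E F) G) (Sum F (Sum E G)).
Proof.
  intros. eapply eqN_trans; [apply eqN_sum; [apply ax_N1; auto | apply eqN_refl; auto]|].
  apply eqN_sym, ax_N2; auto.
Qed.

Lemma absorbs_T2 {T : Type} (l : list (R * T)) (f : R * T -> nexp A) F :
  Defs.dist l -> (forall x, In x l -> wfN (f x)) -> wfN F ->
  absorbs (Pre tau (mix (remap (fun x => Dirac (Sum (f x) F)) l))) F.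
Proof.
  intros Hd Hf HF. unfold absorbs.
  assert (Hl : remap (fun x => Dirac (Sum (f x) F)) l
               = remap (fun y => Dirac (Sum (snd y) F)) (remap f l))
    by (unfold remap; rewrite map_map; reflexivity).
  destruct Hd as (Hn & Hp & Hs).
  rewrite Hl, <- pbig_mix by (rewrite !wsum_remap; exact Hs).
  apply eqN_sym, ax_T2; auto.
  - apply dist_remap. repeat split; auto.
  - apply Forall_map, Forall_forall. auto.
Qed.

Lemma absorbs_T4 {T : Type} a (l : list (R * T)) (f : R * T -> nexp A) (g : R * T -> pexp A) :
  Defs.dist l -> (forall x, In x l -> wfN (f x) /\ wfP (g x)) ->
  absorbs (Pre a (mix (remap (fun x => Dirac (Sum (f x) (Pre tau (g x)))) l)))
          (Pre a (mix (remap g l))).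
Proof.
  intros Hd Hfg. unfold absorbs.
  set (l4 := remap (fun x => (f x, g x)) l).
  assert (H1 : remap (fun x => Dirac (Sum (f x) (Pre tau (g x)))) l
               = remap (fun y => Dirac (Sum (fst (snd y)) (Pre tau (snd (snd y))))) l4)
    by (unfold l4, remap; rewrite map_map; reflexivity).
  assert (H2 : remap g l = remap (fun y => snd (snd y)) l4)
    by (unfold l4, remap; rewrite map_map; reflexivity).
  assert (Hd4 : Defs.dist l4) by (apply dist_remap; auto).
  destruct Hd4 as (Hn & Hp & Hs).
  rewrite H1, H2, <- !pbig_mix by (rewrite wsum_remap; exact Hs).
  apply eqN_sym, ax_T4; [repeat split; auto|].
  apply Forall_map, Forall_forall. auto.
Qed.

Lemma prefix_tau a E : wfN E -> eqN tau (preE a E) (preE a (preE tau E)).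
Proof.
  intros HE.
  assert (Hh : 0 < /2 < 1) by lra.
  assert (HwE : wfP (Dirac E)) by exact HE.
  assert (HwtE : wfP (Dirac (preE tau E))) by exact HE.
  eapply eqN_trans; [apply eqN_pre, eqP_sym, (ax_P3 tau (p := /2)); auto|].
  eapply eqN_trans; [apply eqN_sym, ax_T1; auto|].
  eapply eqN_trans; [apply eqN_pre, ax_P1; auto|].
  eapply eqN_trans; [apply eqN_sym, ax_T1; auto; lra|].
  apply eqN_pre, ax_P3; auto; lra.
Qed.

(* T1 only guards the first branch; guarded branches are rotated to the back. *)
Lemma prefix_tau_branches_app a (u : list (R * nexp A)) (d : list (R * pexp A)) :
  remap (fun x => Dirac (snd x)) u ++ d <> [] -> pos_weights u -> pos_weights d ->
  Forall (fun x => wfN (snd x)) u -> wf_branches d ->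
  eqN tau (Pre a (mix (remap (fun x => Dirac (snd x)) u ++ d)))
          (Pre a (mix (d ++ remap (fun x => Dirac (preE tau (snd x))) u))).
Proof.
  revert d. induction u as [|[w E] u IH]; intros d Hn Hpu Hpd Hwu Hwd.
  - rewrite app_nil_r. apply eqN_refl, wf_mix; auto.
  - inversion Hpu as [|? ? Hw Hpu']; inversion Hwu as [|? ? HE Hwu']; subst. simpl in Hw, HE.
    set (rest := remap (fun x => Dirac (snd x)) u ++ d).
    change (remap ?h ((w, E) :: u)) with ((w, h (w, E)) :: remap h u). simpl snd.
    assert (Hwr : wf_branches rest).
    { apply Forall_app. split; auto. apply Forall_map. exact Hwu'. }
    assert (Hpr : pos_weights rest) by (apply pos_weights_app, Hpd; apply pos_weights_remap; auto).
    assert (Hr : rest = [] \/ rest <> [])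
      by (clearbody rest; destruct rest; [left|right]; congruence).
    destruct Hr as [Hr|Hr].
    + apply app_eq_nil in Hr as [Hu Hd]. apply map_eq_nil in Hu. subst. exact (prefix_tau a E HE).
    + assert (Hs : 0 < wsum rest) by (apply wsum_pos; auto).
      assert (HwtE : wfN (preE tau E)) by exact HE.
      change (((w, Dirac (snd (w, E))) :: remap (fun x => Dirac (snd x)) u) ++ d)
        with ((w, Dirac E) :: rest).
      rewrite mix_cons by auto.
      eapply eqN_trans; [apply eqN_sym, ax_T1; auto; [apply wf_mix | apply ratio_in_01]; auto|].
      rewrite <- mix_cons by auto.
      eapply eqN_trans; [apply eqN_pre, mix_rotate; auto; constructor; auto|].
      unfold rest. rewrite <- app_assoc.
      eapply eqN_trans.
      { apply IH; auto.
        - intros Hc. apply app_eq_nil in Hc as [_ Hc]. apply app_eq_nil in Hc as [_ Hc].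
          discriminate.
        - apply pos_weights_app; auto. repeat constructor; auto.
        - apply Forall_app; split; auto; repeat constructor; auto. }
      rewrite <- app_assoc. apply eqN_refl. simpl wfN. apply wf_mix.
      * intros Hc. apply app_eq_nil in Hc as [_ Hc]. discriminate.
      * apply pos_weights_app; auto. constructor; auto. apply pos_weights_remap; auto.
      * apply Forall_app; split; auto. constructor; auto. apply Forall_map; auto.
Qed.

Lemma prefix_tau_branches a (u : list (R * nexp A)) :
  u <> [] -> pos_weights u -> Forall (fun x => wfN (snd x)) u ->
  eqN tau (Pre a (mix (remap (fun x => Dirac (snd x)) u)))
          (Pre a (mix (remap (fun x => Dirac (preE tau (snd x))) u))).
Proof.
  intros Hn Hp Hw.
  pose proof (prefix_tau_branches_app a u []) as H. rewrite app_nil_r in H.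
  apply H; auto; [apply remap_neq_nil; auto | constructor | constructor].
Qed.

(** * Bound variables and renaming *)

Fixpoint varsN (E : nexp A) : list nat :=
  match E with
  | Nil => [] | Var y => [y] | Pre _ P => varsP P
  | Rec y E => y :: varsN E | Sum E F => varsN E ++ varsN F
  end
with varsP (P : pexp A) : list nat :=
  match P with Dirac E => varsN E | PSum _ P Q => varsP P ++ varsP Q end.

Fixpoint boundN (y : nat) (E : nexp A) : Prop :=
  match E with
  | Nil => False | Var _ => False | Pre _ P => boundP y P
  | Rec z E => y = z \/ boundN y E | Sum E F => boundN y E \/ boundN y F
  end
with boundP (y : nat) (P : pexp A) : Prop :=
  match P with Dirac E => boundN y E | PSum _ P Q => boundP y P \/ boundP y Q end.

Definition fresh (l : list nat) : nat := S (list_max l).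

Lemma fresh_not_in l : ~ In (fresh l) l.
Proof.
  intros H. assert (Hle : Forall (fun k => (k <= list_max l)%nat) l) by (apply list_max_le; lia).
  rewrite Forall_forall in Hle. specialize (Hle _ H). unfold fresh in Hle. lia.
Qed.

(* Renames every bound variable to one outside [S] and outside the body, so
   that substituting a term whose free variables lie in [S] is capture-free. *)
Fixpoint renameN (S : list nat) (E : nexp A) : nexp A :=
  match E with
  | Nil => Nil | Var y => Var y | Pre a P => Pre a (renameP S P)
  | Rec z E => let E' := renameN S E in
               let w := fresh (S ++ varsN E') in Rec w (substN E' z (Var w))
  | Sum E F => Sum (renameN S E) (renameN S F)
  end
with renameP (S : list nat) (P : pexp A) : pexp A :=
  match P with
  | Dirac E => Dirac (renameN S E)
  | PSum p P Q => PSum p (renameP S P) (renameP S Q)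
  end.

Lemma free_vars :
  (forall (E : nexp A) y, freeN y E -> In y (varsN E)) /\
  (forall (P : pexp A) y, freeP y P -> In y (varsP P)).
Proof.
  apply exp_mut; simpl; intros; try rewrite in_app_iff; firstorder.
Qed.

Lemma bound_vars :
  (forall (E : nexp A) y, boundN y E -> In y (varsN E)) /\
  (forall (P : pexp A) y, boundP y P -> In y (varsP P)).
Proof.
  apply exp_mut; simpl; intros; try rewrite in_app_iff; firstorder.
Qed.

Lemma bound_subst_var :
  (forall (E : nexp A) y x w, boundN y (substN E x (Var w)) -> boundN y E) /\
  (forall (P : pexp A) y x w, boundP y (substP P x (Var w)) -> boundP y P).
Proof.
  apply exp_mut; simpl; intros; try destruct (Nat.eqb _ _); simpl in *; firstorder.
Qed.

Lemma free_subst :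
  (forall (E : nexp A) y x G, freeN y (substN E x G) -> (freeN y E /\ y <> x) \/ freeN y G) /\
  (forall (P : pexp A) y x G, freeP y (substP P x G) -> (freeP y P /\ y <> x) \/ freeN y G).
Proof.
  apply exp_mut; simpl; intros.
  - tauto.
  - destruct (Nat.eqb x n) eqn:Hx; [tauto|].
    apply Nat.eqb_neq in Hx. simpl in H. left. split; [exact H | congruence].
  - eauto.
  - destruct (Nat.eqb x n) eqn:Hx; simpl in H0.
    + apply Nat.eqb_eq in Hx. subst. tauto.
    + destruct H0 as [Hyn Hy]. destruct (H _ _ _ Hy); tauto.
  - destruct H1 as [Hy|Hy]; [destruct (H _ _ _ Hy) | destruct (H0 _ _ _ Hy)]; tauto.
  - eauto.
  - destruct H1 as [Hy|Hy]; [destruct (H _ _ _ Hy) | destruct (H0 _ _ _ Hy)]; tauto.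
Qed.

Lemma substOk_of_bound :
  (forall (E : nexp A) x G, (forall y, boundN y E -> ~ freeN y G) -> substOkN x G E) /\
  (forall (P : pexp A) x G, (forall y, boundP y P -> ~ freeN y G) -> substOkP x G P).
Proof.
  apply exp_mut; simpl; intros; auto.
  right; right. split; auto.
Qed.

Lemma wf_subst :
  (forall (E : nexp A) x G, wfN E -> wfN G -> wfN (substN E x G)) /\
  (forall (P : pexp A) x G, wfP P -> wfN G -> wfP (substP P x G)).
Proof.
  apply exp_mut; simpl; intros; try destruct (Nat.eqb _ _); simpl; firstorder.
Qed.

Lemma wf_rename :
  (forall (E : nexp A) S, wfN E -> wfN (renameN S E)) /\
  (forall (P : pexp A) S, wfP P -> wfP (renameP S P)).
Proof.
  apply exp_mut; simpl; intros; firstorder.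
  apply (proj1 wf_subst); simpl; auto.
Qed.

Lemma bound_rename :
  (forall (E : nexp A) S y, boundN y (renameN S E) -> ~ In y S) /\
  (forall (P : pexp A) S y, boundP y (renameP S P) -> ~ In y S).
Proof.
  apply exp_mut; simpl; intros; try tauto; try (destruct H1; eauto; fail).
  - eauto.
  - destruct H0 as [->|Hy].
    + intros Hin. apply (fresh_not_in (S ++ varsN (renameN S n0))), in_app_iff. auto.
    + apply (proj1 bound_subst_var) in Hy. eauto.
  - eauto.
Qed.

Lemma free_rename :
  (forall (E : nexp A) S y, freeN y (renameN S E) -> freeN y E) /\
  (forall (P : pexp A) S y, freeP y (renameP S P) -> freeP y P).
Proof.
  apply exp_mut; simpl; intros; try tauto; try (destruct H1; eauto; fail).
  - eauto.
  - destruct H0 as [Hyw Hy]. apply (proj1 free_subst) in Hy as [[Hy Hyn]|Hy].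
    + split; eauto.
    + simpl in Hy. congruence.
  - eauto.
Qed.

Lemma eqN_rename :
  (forall (E : nexp A) S, wfN E -> eqN tau E (renameN S E)) /\
  (forall (P : pexp A) S, wfP P -> eqP tau P (renameP S P)).
Proof.
  apply exp_mut; simpl; intros.
  - apply eqN_refl; exact I.
  - apply eqN_refl; exact I.
  - apply eqN_pre; auto.
  - set (E' := renameN S n0). set (w := fresh (S ++ varsN E')).
    assert (Hw : ~ In w (varsN E'))
      by (intros Hin; apply (fresh_not_in (S ++ varsN E')), in_app_iff; auto).
    eapply eqN_trans; [apply eqN_rec; eauto|].
    apply eqN_alpha.
    + apply (proj1 wf_rename); auto.
    + simpl. intros [_ Hf]. apply Hw, (proj1 free_vars), Hf.
    + apply (proj1 substOk_of_bound). simpl. intros y Hy ->. apply Hw, (proj1 bound_vars), Hy.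
  - destruct H1. apply eqN_sum; auto.
  - apply eqP_dirac; auto.
  - destruct H1 as (Hr & HP & HQ). apply eqP_psum; auto.
Qed.

Lemma eqN_rec_unfold Y B : wfN B ->
  eqN tau (Rec Y B) (substN (renameN (varsN B) B) Y (Rec Y (renameN (varsN B) B))).
Proof.
  intros HB. set (B' := renameN (varsN B) B).
  eapply eqN_trans; [apply eqN_rec, (proj1 eqN_rename); auto|].
  apply ax_R1; [apply (proj1 wf_rename); auto|].
  apply (proj1 substOk_of_bound). simpl. intros y Hy [_ Hf].
  apply (proj1 bound_rename _ _ _ Hy), (proj1 free_vars), (proj1 free_rename _ _ _ Hf).
Qed.

(** * Headed distributions *)

Definition hbranch (x : R * (nat * nexp A)) : pexp A :=
  Dirac (Sum (Var (fst (snd x))) (snd (snd x))).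
Definition hmix (Q : list (R * (nat * nexp A))) : pexp A := mix (remap hbranch Q).
Definition wf_bodies (Q : list (R * (nat * nexp A))) : Prop :=
  Forall (fun x => wfN (snd (snd x))) Q.
Definition hdist (Q : list (R * (nat * nexp A))) : Prop := Defs.dist Q /\ wf_bodies Q.
Definition heads (Q : list (R * (nat * nexp A))) : vset :=
  fun z => Exists (fun x => fst (snd x) = z) Q.
Definition map_bodies (f : nexp A -> nexp A) (Q : list (R * (nat * nexp A))) :=
  map (fun x => (fst x, (fst (snd x), f (snd (snd x))))) Q.

Lemma map_bodies_comp f g Q : map_bodies g (map_bodies f Q) = map_bodies (fun F => g (f F)) Q.
Proof. unfold map_bodies. rewrite map_map. reflexivity. Qed.

Lemma wf_hmix Q : Q <> [] -> pos_weights Q -> wf_bodies Q -> wfP (hmix Q).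
Proof.
  intros Hn Hp Hw. apply wf_mix.
  - apply remap_neq_nil; auto.
  - apply pos_weights_remap; auto.
  - apply Forall_map. eapply Forall_impl; [|exact Hw]. simpl; auto.
Qed.

Lemma wf_tau_hmix Q : hdist Q -> wfN (Pre tau (hmix Q)).
Proof. intros ((Hn & Hp & _) & Hw). apply wf_hmix; auto. Qed.

Lemma heads_map_bodies f Q : seteq (heads (map_bodies f Q)) (heads Q).
Proof. intros z. unfold heads, map_bodies. rewrite Exists_map. reflexivity. Qed.

Lemma hdist_map_bodies f Q : hdist Q -> (forall F, wfN F -> wfN (f F)) -> hdist (map_bodies f Q).
Proof.
  intros ((Hn & Hp & Hs) & Hw) Hf. repeat split.
  - intros Hc. apply map_eq_nil in Hc. auto.
  - apply Forall_map. exact Hp.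
  - change (wsum (remap (fun x => (fst (snd x), f (snd (snd x)))) Q) = 1).
    rewrite wsum_remap. exact Hs.
  - apply Forall_map. eapply Forall_impl; [|exact Hw]. simpl; auto.
Qed.

Lemma hmix_cons x Q : Q <> [] ->
  hmix (x :: Q) = PSum (fst x / (fst x + wsum Q)) (hbranch x) (hmix Q).
Proof.
  intros Hn. unfold hmix.
  change (remap hbranch (x :: Q)) with ((fst x, hbranch x) :: remap hbranch Q).
  rewrite mix_cons, wsum_remap by (apply remap_neq_nil; auto). reflexivity.
Qed.

Lemma hmix_rotate x Q : Q <> [] -> pos_weights (x :: Q) -> wf_bodies (x :: Q) ->
  eqP tau (hmix (x :: Q)) (hmix (Q ++ [x])).
Proof.
  intros Hn Hp Hw. unfold hmix.
  replace (remap hbranch (Q ++ [x])) with (remap hbranch Q ++ [(fst x, hbranch x)])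
    by (unfold remap; rewrite map_app; reflexivity).
  apply (mix_rotate (fst x, hbranch x)).
  - apply remap_neq_nil; auto.
  - apply (pos_weights_remap hbranch (x :: Q)); auto.
  - change (wf_branches (remap hbranch (x :: Q))).
    apply Forall_map. eapply Forall_impl; [|exact Hw]. simpl; auto.
Qed.

Lemma hmix_normalize Q : pos_weights Q -> Q <> [] -> hmix (normalize Q) = hmix Q.
Proof.
  intros Hp Hn. unfold hmix, normalize. rewrite remap_scale by reflexivity.
  apply mix_scale; [|apply pos_weights_remap; auto].
  apply Rinv_0_lt_compat, wsum_pos; auto.
Qed.

Lemma heads_normalize Q : seteq (heads (normalize Q)) (heads Q).
Proof. intros z. unfold heads, normalize, scale. rewrite Exists_map. reflexivity. Qed.

Lemma hdist_normalize Q : Q <> [] -> pos_weights Q -> wf_bodies Q -> hdist (normalize Q).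
Proof. intros Hn Hp Hw. split; [apply dist_normalize; auto | apply Forall_map; exact Hw]. Qed.

Lemma heads_flatten L z : heads (flatten L) z <-> Exists (fun x => heads (snd x) z) L.
Proof. apply (Exists_flatten (fun y => fst y = z)). Qed.

Lemma hdist_flatten L : Defs.dist L -> Forall (fun x => hdist (snd x)) L -> hdist (flatten L).
Proof.
  intros (Hn & Hp & Hs) HL.
  assert (Hd : Forall (fun x => Defs.dist (snd x)) L)
    by (eapply Forall_impl; [|exact HL]; intros x []; auto).
  repeat split.
  - apply flatten_neq_nil; auto.
  - apply pos_weights_flatten; auto.
  - change (wsum (flatten L) = 1). rewrite wsum_flatten; auto.
  - apply (Forall_flatten (fun y => wfN (snd y))).
    eapply Forall_impl; [|exact HL]. intros x []; auto.
Qed.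

Lemma hmix_flatten L : Defs.dist L -> Forall (fun x => hdist (snd x)) L ->
  eqP tau (mix (remap (fun x => hmix (snd x)) L)) (hmix (flatten L)).
Proof.
  intros (Hn & Hp & _) HL. unfold hmix at 2.
  rewrite remap_flatten by reflexivity.
  rewrite <- (remap_remap (fun x => remap hbranch (snd x)) (fun y => mix (snd y))).
  apply mix_flatten.
  - apply remap_neq_nil; auto.
  - apply pos_weights_remap; auto.
  - apply Forall_map. eapply Forall_impl; [|exact HL]. intros x [Hd _]. apply dist_remap; auto.
  - apply Forall_map. eapply Forall_impl; [|exact HL]. intros x [_ Hw].
    apply Forall_map. eapply Forall_impl; [|exact Hw]. simpl; auto.
Qed.

Definition drop_head (Y : nat) (Q : list (R * (nat * nexp A))) : list (R * (nat * nexp A)) :=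
  filter (fun x => negb (Nat.eqb (fst (snd x)) Y)) Q.

Lemma heads_drop_head Y Q z : heads (drop_head Y Q) z <-> heads Q z /\ z <> Y.
Proof.
  unfold heads, drop_head. rewrite !Exists_exists. split.
  - intros (x & Hx & <-). apply filter_In in Hx as [Hx Hn].
    apply Bool.negb_true_iff, Nat.eqb_neq in Hn. eauto.
  - intros [(x & Hx & <-) HY]. exists x. split; auto. apply filter_In. split; auto.
    apply Bool.negb_true_iff, Nat.eqb_neq. auto.
Qed.

Lemma drop_head_avoids Y Q x : In x (drop_head Y Q) -> fst (snd x) <> Y.
Proof.
  intros Hx. apply filter_In in Hx as [_ Hx]. apply Bool.negb_true_iff, Nat.eqb_neq in Hx. auto.
Qed.

Lemma drop_head_nil Y Q : Q <> [] -> drop_head Y Q = [] -> seteq (heads Q) (fun z => z = Y).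
Proof.
  intros Hn HQ z. split.
  - intros Hz. destruct (Nat.eq_dec z Y) as [|HzY]; auto.
    assert (Hd : heads (drop_head Y Q) z) by (apply heads_drop_head; auto).
    rewrite HQ in Hd. inversion Hd.
  - intros ->. destruct Q as [|x Q]; [congruence|]. left.
    destruct (Nat.eq_dec (fst (snd x)) Y) as [|Hx]; auto.
    assert (Hd : heads (drop_head Y (x :: Q)) (fst (snd x))).
    { apply heads_drop_head. split; auto. now left. }
    rewrite HQ in Hd. inversion Hd.
Qed.

Lemma Forall_drop_head (Pr : R * (nat * nexp A) -> Prop) Y Q :
  Forall Pr Q -> Forall Pr (drop_head Y Q).
Proof.
  rewrite !Forall_forall. intros H x Hx. apply filter_In in Hx as [Hx _]. auto.
Qed.

(** * Unfolding recursion *)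

Lemma rename_hmix S Q : Q <> [] -> renameP S (hmix Q) = hmix (map_bodies (renameN S) Q).
Proof.
  intros Hn. unfold hmix.
  rewrite (mix_hom (renameP S)) by (reflexivity || apply remap_neq_nil; auto).
  unfold remap, map_bodies. rewrite !map_map. reflexivity.
Qed.

Lemma subst_hmix Q Y G : Q <> [] -> (forall x, In x Q -> fst (snd x) <> Y) ->
  substP (hmix Q) Y G = hmix (map_bodies (fun F => substN F Y G) Q).
Proof.
  intros Hn HY. unfold hmix.
  rewrite (mix_hom (fun P => substP P Y G)) by (reflexivity || apply remap_neq_nil; auto).
  unfold remap, map_bodies. rewrite !map_map. f_equal. apply map_ext_in.
  intros x Hx. simpl. destruct (Nat.eqb_neq Y (fst (snd x))) as [_ ->]; auto.
  intros Heq. apply (HY x Hx). auto.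
Qed.

Lemma rec_absorbs_var Y E Z : wfN E -> Z <> Y -> absorbs E (Var Z) -> absorbs (Rec Y E) (Var Z).
Proof.
  intros HE HZ H.
  set (B := Sum E (Var Z)).
  assert (HB : wfN B) by (split; auto; exact I).
  set (B' := renameN (varsN B) B).
  set (G := Rec Y B').
  assert (HB' : wfN B') by (apply (proj1 wf_rename); auto).
  assert (Hsubst : substN B' Y G = Sum (substN (renameN (varsN B) E) Y G) (Var Z)).
  { unfold B', B. cbn [renameN substN]. destruct (Nat.eqb_neq Y Z) as [_ ->]; auto. }
  apply (absorbs_of_eqN_sum _ (substN (renameN (varsN B) E) Y G)); [| |exact I].
  - rewrite <- Hsubst. eapply eqN_trans; [apply eqN_rec, H|]. apply eqN_rec_unfold; auto.
  - apply (proj1 wf_subst); [apply (proj1 wf_rename); auto | exact HB'].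
Qed.

Lemma rec_tau_hmix_unfold Y Q B : hdist Q -> (forall x, In x Q -> fst (snd x) <> Y) -> wfN B ->
  exists f K, (forall F, wfN F -> wfN (f F)) /\ wfN K /\
    eqN tau (Rec Y (Sum (Pre tau (hmix Q)) B)) (Sum (Pre tau (hmix (map_bodies f Q))) K).
Proof.
  intros HQ HY HB. pose proof HQ as ((Hn & Hp & _) & Hw).
  set (B0 := Sum (Pre tau (hmix Q)) B).
  assert (HB0 : wfN B0) by (split; auto; apply wf_hmix; auto).
  set (S := varsN B0).
  set (G := Rec Y (renameN S B0)).
  assert (HG : wfN G) by exact (proj1 wf_rename B0 S HB0).
  exists (fun F => substN (renameN S F) Y G), (substN (renameN S B) Y G).
  split; [|split].
  - intros F HF. apply (proj1 wf_subst); auto. apply (proj1 wf_rename); auto.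
  - apply (proj1 wf_subst); auto. apply (proj1 wf_rename); auto.
  - eapply eqN_trans; [apply eqN_rec_unfold; auto|]. fold S G.
    unfold B0 at 1. cbn [renameN substN].
    rewrite rename_hmix, subst_hmix, map_bodies_comp; auto.
    + apply eqN_refl. split.
      * apply wf_tau_hmix, hdist_map_bodies; auto.
        intros F HF. apply (proj1 wf_subst); auto. apply (proj1 wf_rename); auto.
      * apply (proj1 wf_subst); auto. apply (proj1 wf_rename); auto.
    + intros Hc. apply map_eq_nil in Hc. auto.
    + intros x Hx. apply in_map_iff in Hx as (y & <- & Hy). simpl. apply HY; auto.
Qed.

(* R3 deletes a branch headed by the bound variable [Y]; other branches are
   rotated to the back. *)
Lemma rec_drop_head_app Y u d B :
  pos_weights (u ++ d) -> wf_bodies (u ++ d) -> wfN B -> d ++ drop_head Y u <> [] ->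
  exists B', wfN B' /\
    eqN tau (Rec Y (Sum (Pre tau (hmix (u ++ d))) B))
            (Rec Y (Sum (Pre tau (hmix (d ++ drop_head Y u))) B')).
Proof.
  revert d B. induction u as [|x u IH]; intros d B Hp Hw HB Hn.
  { exists B. split; auto. rewrite app_nil_r in *. apply eqN_refl. repeat split; auto.
    apply wf_hmix; auto. }
  simpl app in Hp, Hw |- *. inversion Hp as [|? ? Hx Hpr]; inversion Hw as [|? ? HF Hwr]; subst.
  set (rest := u ++ d) in *.
  assert (Hr : rest = [] \/ rest <> [])
    by (clearbody rest; destruct rest; [left|right]; congruence).
  destruct Hr as [Hr|Hr].
  { apply app_eq_nil in Hr as [-> ->]. unfold drop_head in Hn |- *. simpl in Hn |- *.
    destruct (negb _); [|congruence].
    exists B. split; auto. apply eqN_refl. repeat split; auto. }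
  assert (Hwr' : wfP (hmix rest)) by (apply wf_hmix; auto).
  assert (Hq : 0 < fst x / (fst x + wsum rest) < 1) by (apply ratio_in_01, wsum_pos; auto).
  unfold drop_head in Hn |- *. simpl filter in Hn |- *. fold (drop_head Y u) in Hn |- *.
  destruct (Nat.eqb (fst (snd x)) Y) eqn:HxY; simpl in Hn |- *.
  - apply Nat.eqb_eq in HxY.
    set (T := Pre tau (hmix (x :: rest))).
    assert (HT : wfN T) by (apply wf_hmix; auto; discriminate).
    destruct (IH d (Sum T B)) as (B' & HB' & Heq); auto; [split; auto|].
    exists B'. split; auto. eapply eqN_trans; [|exact Heq].
    eapply eqN_trans; [|apply eqN_rec, sum_exchange; auto].
    unfold T. rewrite hmix_cons by auto. unfold hbranch. rewrite HxY.
    apply ax_R3; auto.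
  - destruct (IH (d ++ [x]) B) as (B' & HB' & Heq); auto.
    + rewrite app_assoc. apply pos_weights_app; repeat constructor; auto.
    + rewrite app_assoc. apply Forall_app; split; repeat constructor; auto.
    + intros Hc. apply app_eq_nil in Hc as [Hc _]. apply app_eq_nil in Hc as [_ Hc]. discriminate.
    + exists B'. split; auto. rewrite <- app_assoc in Heq. simpl app in Heq.
      eapply eqN_trans; [|exact Heq].
      rewrite app_assoc. fold rest.
      apply eqN_rec, eqN_sum; [apply eqN_pre, hmix_rotate; auto | apply eqN_refl; auto].
Qed.

Lemma rec_absorbs_hmix Y E Q : wfN E -> hdist Q -> drop_head Y Q <> [] ->
  absorbs E (Pre tau (hmix Q)) ->
  exists Q', hdist Q' /\ seteq (heads Q') (fun z => heads Q z /\ z <> Y) /\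
    absorbs (Rec Y E) (Pre tau (hmix Q')).
Proof.
  intros HE HQ Hd HT. pose proof HQ as ((Hn & Hp & _) & Hw).
  set (Qd := drop_head Y Q) in *.
  assert (Hpd : pos_weights Qd) by (apply Forall_drop_head; auto).
  assert (Hwd : wf_bodies Qd) by (apply Forall_drop_head; auto).
  assert (HQn : hdist (normalize Qd)) by (apply hdist_normalize; auto).
  assert (HT' : wfN (Pre tau (hmix Q))) by (apply wf_tau_hmix; auto).
  destruct (rec_drop_head_app Y Q [] E) as (B & HB & Hdrop); rewrite ?app_nil_r; auto.
  rewrite app_nil_r in Hdrop. simpl app in Hdrop. fold Qd in Hdrop.
  destruct (rec_tau_hmix_unfold Y (normalize Qd) B) as (f & K & Hf & HK & Hunf); auto.
  { intros x Hx. apply in_map_iff in Hx as (y & <- & Hy). exact (drop_head_avoids Y Q y Hy). }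
  exists (map_bodies f (normalize Qd)). split; [|split].
  - apply hdist_map_bodies; auto.
  - intros z. rewrite (heads_map_bodies _ _ z), (heads_normalize _ z). apply heads_drop_head.
  - assert (HQ' : wfN (Pre tau (hmix (map_bodies f (normalize Qd))))).
    { apply wf_tau_hmix, hdist_map_bodies; auto. }
    apply (absorbs_of_eqN_sum _ K); auto.
    eapply eqN_trans; [apply eqN_rec; eapply eqN_trans; [exact HT | apply ax_N1; auto]|].
    eapply eqN_trans; [exact Hdrop|].
    rewrite <- (hmix_normalize Qd) by auto.
    eapply eqN_trans; [exact Hunf | apply ax_N1; auto].
Qed.

(** * The invariant *)

Definition ug_invN (E : nexp A) (V : vset) : Prop :=
  wfN E ->
  (exists Z, seteq V (fun z => z = Z) /\ absorbs E (Var Z)) \/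
  (exists Q, hdist Q /\ seteq V (heads Q) /\ absorbs E (Pre tau (hmix Q))).

(* A leaf [(p, (e, Q))] is a branch [∂e] of weight [p] together with a witness
   [Q] absorbed by [τ.e]. *)
Definition leaf_ok (V : vset) (x : R * (nexp A * list (R * (nat * nexp A)))) : Prop :=
  wfN (fst (snd x)) /\ hdist (snd (snd x)) /\ (forall z, heads (snd (snd x)) z -> V z) /\
  absorbs (preE tau (fst (snd x))) (Pre tau (hmix (snd (snd x)))).

Definition leaf_mix (l : list (R * (nexp A * list (R * (nat * nexp A))))) : pexp A :=
  mix (remap (fun x => Dirac (fst (snd x))) l).

Definition leaf_heads (l : list (R * (nexp A * list (R * (nat * nexp A)))))
  : list (R * (nat * nexp A)) :=
  flatten (remap (fun x => snd (snd x)) l).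

Definition ug_invP (P : pexp A) (V : vset) : Prop :=
  wfP P -> exists l, Defs.dist l /\ eqP tau P (leaf_mix l) /\ Forall (leaf_ok V) l /\
    (forall z, V z -> heads (leaf_heads l) z).

Lemma heads_leaf_heads l z :
  heads (leaf_heads l) z <-> Exists (fun x => heads (snd (snd x)) z) l.
Proof.
  unfold leaf_heads. rewrite heads_flatten. unfold remap. rewrite Exists_map. reflexivity.
Qed.

Lemma ug_inv_var X V : seteq V (fun z => z = X) -> ug_invN (Var X) V.
Proof. intros HV _. left. exists X. split; auto. apply absorbs_self. exact I. Qed.

Lemma ug_inv_sumL E F V : ug_invN E V -> ug_invN (Sum E F) V.
Proof.
  intros H [HE HF]. destruct (H HE) as [(Z & HV & HZ)|(Q & HQ & HV & HT)].
  - left. exists Z. split; auto. apply absorbs_sumL; auto. exact I.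
  - right. exists Q. do 2 (split; auto). apply absorbs_sumL; auto. apply wf_tau_hmix; auto.
Qed.

Lemma ug_inv_sumR E F V : ug_invN F V -> ug_invN (Sum E F) V.
Proof.
  intros H [HE HF]. destruct (H HF) as [(Z & HV & HZ)|(Q & HQ & HV & HT)].
  - left. exists Z. split; auto. apply absorbs_sumR; auto. exact I.
  - right. exists Q. do 2 (split; auto). apply absorbs_sumR; auto. apply wf_tau_hmix; auto.
Qed.

Lemma tau_absorbs_of_ug_inv E V : wfN E -> ug_invN E V ->
  exists Q, hdist Q /\ seteq V (heads Q) /\ absorbs (preE tau E) (Pre tau (hmix Q)).
Proof.
  intros HE H. destruct (H HE) as [(Z & HV & HZ)|(Q & HQ & HV & HT)].
  - exists [(1, (Z, E))]. split; [|split].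
    + repeat split;
        [discriminate | repeat constructor; simpl; lra | simpl; lra | repeat constructor; auto].
    + intros z. rewrite (HV z). unfold heads. rewrite Exists_cons, Exists_nil. simpl.
      split; [intros ->; now left | intros [->|[]]; reflexivity].
    + apply (absorbs_proper (preE tau E) _ (preE tau E));
        [apply eqN_refl; exact HE | | apply absorbs_self; exact HE].
      apply eqN_pre, eqP_dirac. eapply eqN_trans; [exact HZ|]. apply ax_N1; [exact HE | exact I].
  - exists Q. do 2 (split; auto).
    assert (HwT : wfN (Pre tau (hmix Q))) by (apply wf_tau_hmix; auto).
    apply (absorbs_proper (preE tau (Sum E (Pre tau (hmix Q)))) _ (Pre tau (hmix Q))).
    + apply eqN_pre, eqP_dirac, eqN_sym, HT.
    + apply eqN_refl; auto.
    + refine (absorbs_T2 [(1, E)] snd _ _ _ HwT).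
      * repeat split; [discriminate | repeat constructor; simpl; lra | simpl; lra].
      * intros x [<-|[]]. exact HE.
Qed.

Lemma ug_inv_dirac E V : ug_invN E V -> ug_invP (Dirac E) V.
Proof.
  intros H HE. destruct (tau_absorbs_of_ug_inv E V HE H) as (Q & HQ & HV & HT).
  exists [(1, (E, Q))]. split; [|split; [|split]].
  - repeat split; [discriminate | repeat constructor; simpl; lra | simpl; lra].
  - apply eqP_refl. exact HE.
  - constructor; [|constructor].
    split; [exact HE | split; [exact HQ | split; [intros z Hz; apply HV; exact Hz | exact HT]]].
  - intros z Hz. apply heads_leaf_heads. left. apply HV. exact Hz.
Qed.

Lemma leaf_ok_mono V V' x : (forall z, V z -> V' z) -> leaf_ok V x -> leaf_ok V' x.
Proof. intros HVV' (H1 & H2 & H3 & H4). split; [|split; [|split]]; auto. Qed.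

Lemma ug_inv_psum p P Q V W U : ug_invP P V -> ug_invP Q W ->
  seteq U (fun z => V z \/ W z) -> ug_invP (PSum p P Q) U.
Proof.
  intros HP HQ HU (Hp & HwP & HwQ).
  destruct (HP HwP) as (l1 & Hd1 & He1 & Hl1 & Hc1).
  destruct (HQ HwQ) as (l2 & Hd2 & He2 & Hl2 & Hc2).
  pose proof Hd1 as (Hn1 & Hp1 & Hs1). pose proof Hd2 as (Hn2 & Hp2 & Hs2).
  assert (Hwl : forall V l, Forall (leaf_ok V) l ->
                            wf_branches (remap (fun x => Dirac (fst (snd x))) l)).
  { intros V0 l Hl. apply Forall_map. eapply Forall_impl; [|exact Hl]. intros x Hx. apply Hx. }
  exists (scale p l1 ++ scale (1 - p) l2). split; [|split; [|split]].
  - repeat split.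
    + intros Hc. apply app_eq_nil in Hc as [Hc _]. apply (scale_neq_nil p l1); auto.
    + apply pos_weights_app; apply pos_weights_scale; auto; lra.
    + change (wsum (scale p l1 ++ scale (1 - p) l2) = 1).
      change (wsum l1 = 1) in Hs1. change (wsum l2 = 1) in Hs2.
      rewrite wsum_app, !wsum_scale, Hs1, Hs2. ring.
  - eapply eqP_trans; [apply eqP_psum; [lra | exact He1 | exact He2]|].
    unfold leaf_mix. rewrite remap_app, !remap_scale by reflexivity.
    apply mix_psum; [lra | apply dist_remap; auto | apply dist_remap; auto | |].
    + exact (Hwl V l1 Hl1).
    + exact (Hwl W l2 Hl2).
  - apply Forall_app. split; apply Forall_map.
    + eapply Forall_impl; [|exact Hl1]. intros x Hx.
      apply (leaf_ok_mono V); [intros z Hz; apply HU; auto | exact Hx].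
    + eapply Forall_impl; [|exact Hl2]. intros x Hx.
      apply (leaf_ok_mono W); [intros z Hz; apply HU; auto | exact Hx].
  - intros z Hz. apply heads_leaf_heads. unfold scale. rewrite Exists_app, !Exists_map.
    apply HU in Hz as [Hz|Hz]; [left; apply Hc1 in Hz | right; apply Hc2 in Hz];
      apply heads_leaf_heads in Hz; exact Hz.
Qed.

Lemma tau_leaf_mix_absorbs V l : Defs.dist l -> Forall (leaf_ok V) l ->
  absorbs (Pre tau (leaf_mix l)) (Pre tau (hmix (leaf_heads l))).
Proof.
  intros Hd Hl. pose proof Hd as (Hn & Hp & _). rewrite Forall_forall in Hl.
  set (X := mix (remap (fun x =>
                Dirac (Sum (preE tau (fst (snd x))) (Pre tau (hmix (snd (snd x)))))) l)).
  assert (HX : eqN tau (Pre tau (leaf_mix l)) (Pre tau X)).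
  { eapply eqN_trans.
    { pose proof (prefix_tau_branches tau (remap (fun x => fst (snd x)) l)) as H.
      rewrite !remap_remap in H. apply H.
      - apply remap_neq_nil; auto.
      - apply pos_weights_remap; auto.
      - apply Forall_map, Forall_forall. intros x Hx. apply Hl; auto. }
    apply eqN_pre, mix_cong; auto.
    intros x Hx. apply eqP_dirac. apply Hl; auto. }
  apply (absorbs_proper (Pre tau X) _ (Pre tau (mix (remap (fun x => hmix (snd (snd x))) l)))).
  - apply eqN_sym, HX.
  - apply eqN_pre. unfold leaf_heads.
    pose proof (hmix_flatten (remap (fun x => snd (snd x)) l)) as H.
    rewrite remap_remap in H. apply H.
    + apply dist_remap; auto.
    + apply Forall_map, Forall_forall. intros x Hx. apply Hl; auto.
  - apply absorbs_T4; auto. intros x Hx. split; [apply Hl; auto|].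
    destruct (Hl x Hx) as (_ & ((Hn' & Hp' & _) & Hw') & _). apply wf_hmix; auto.
Qed.

Lemma ug_inv_tau P V : ug_invP P V -> ug_invN (Pre tau P) V.
Proof.
  intros H HP. destruct (H HP) as (l & Hd & He & Hl & Hc).
  assert (Hh : hdist (leaf_heads l)).
  { apply hdist_flatten; [apply dist_remap; auto|].
    apply Forall_map. eapply Forall_impl; [|exact Hl]. intros x Hx. apply Hx. }
  right. exists (leaf_heads l). split; [|split]; auto.
  - intros z. split; [apply Hc|]. intros Hz.
    apply heads_leaf_heads, Exists_exists in Hz as (x & Hx & Hz).
    rewrite Forall_forall in Hl. apply (Hl x Hx); auto.
  - apply (absorbs_proper (Pre tau (leaf_mix l)) _ (Pre tau (hmix (leaf_heads l)))).
    + apply eqN_pre, eqP_sym, He.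
    + apply eqN_refl, wf_tau_hmix; auto.
    + apply tau_leaf_mix_absorbs with V; auto.
Qed.

Lemma ug_inv_rec Y E V V' : ug_invN E V -> ~ seteq V (fun z => z = Y) ->
  seteq V' (fun z => V z /\ z <> Y) -> ug_invN (Rec Y E) V'.
Proof.
  intros H HVY HV' HE. destruct (H HE) as [(Z & HV & HZ)|(Q & HQ & HV & HT)].
  - assert (HZY : Z <> Y) by (intros ->; apply HVY, HV).
    left. exists Z. split.
    + intros z. rewrite (HV' z), (HV z). split; [tauto | intros ->; auto].
    + apply rec_absorbs_var; auto.
  - assert (Hd : drop_head Y Q <> []).
    { intros Hnil. apply HVY. intros z. rewrite (HV z). apply drop_head_nil; auto. apply HQ. }
    destruct (rec_absorbs_hmix Y E Q HE HQ Hd HT) as (Q' & HQ' & Hh & HT').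
    right. exists Q'. split; [|split]; auto.
    intros z. rewrite (HV' z), (Hh z), (HV z). reflexivity.
Qed.

Lemma ug_invN_of_ugN E V : ugN tau E V -> ug_invN E V.
Proof.
  revert E V. apply (ugN_min A tau ug_invN ug_invP).
  - exact ug_inv_var.
  - intros P V _ H. apply ug_inv_tau, H.
  - intros Y E V V' _ H HY HV'. eapply ug_inv_rec; eauto.
  - intros E F V _ H. apply ug_inv_sumL, H.
  - intros E F W _ H. apply ug_inv_sumR, H.
  - intros E V _ H. apply ug_inv_dirac, H.
  - intros p P Q V W U _ HP _ HQ HU. eapply ug_inv_psum; eauto.
Qed.

Lemma absorbs_var_of_heads E Q X : wfN E -> hdist Q -> seteq (heads Q) (fun z => z = X) ->
  absorbs E (Pre tau (hmix Q)) -> absorbs E (Var X).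
Proof.
  intros HE HQ HX HT. pose proof HQ as (Hd & Hw). pose proof Hd as (Hn & Hp & _).
  unfold wf_bodies in Hw. rewrite Forall_forall in Hw.
  apply (absorbs_trans _ (Pre tau (hmix Q))); auto; [|apply wf_tau_hmix; auto | exact I].
  apply (absorbs_proper
           (Pre tau (mix (remap (fun x => Dirac (Sum (snd (snd x)) (Var X))) Q))) _ (Var X)).
  - apply eqN_pre, eqP_sym, mix_cong; auto. intros x Hx.
    assert (Hh : fst (snd x) = X) by (apply HX; apply Exists_exists; eauto).
    unfold hbranch. rewrite Hh. apply eqP_dirac, ax_N1; [exact I | apply Hw; auto].
  - apply eqN_refl. exact I.
  - apply absorbs_T2; auto. exact I.
Qed.

End Derivations.

Theorem mainTheorem8 (A : Type) (tau : A) (E : nexp A) (X : nat) :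
  wfN E -> ugN tau E (fun z => z = X) -> eqN tau E (Sum E (Var X)).
Proof.
  intros HE Hug.
  destruct (ug_invN_of_ugN A tau E _ Hug HE) as [(Z & HZ & Habs) | (Q & HQ & HX & Habs)].
  - replace X with Z by (symmetry; apply HZ; reflexivity). exact Habs.
  - apply (absorbs_var_of_heads A tau E Q X); auto.
    intros z. symmetry. apply HX.
Qed.
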